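(* Let $G$ be a simple, undirected, connected graph on $N$ vertices with edge set $E$ and degree sequence $d_1\le d_2\le\cdots\le d_N$. If $d_j=1$ for $1\le j\le M$, where $M<N$, then $$R^+(G)\ge N(N-4)+2|E|\left[M+\frac{(N-M)^2}{2|E|-M}\right].$$
   Context: For vertices $i,j$ of $G$, $R_{ij}$ denotes the effective resistance between $i$ and $j$ when every edge of $G$ is a unit resistor. The additive degree-Kirchhoff index is $R^+(G)=\sum_{i<j}(d_i+d_j)R_{ij}$, where $d_i$ is the degree of vertex $i$. *)

From HB Require Import structures.
From mathcomp Require Import all_boot all_order all_algebra.
Set Implicit Arguments. Unset Strict Implicit. Unset Printing Implicit Defensive.
Import Order.TTheory GRing.Theory Num.Theory.
Local Open Scope ring_scope.

Definition simple_graph (N : nat) (e : rel 'I_N) : Prop :=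
  symmetric e /\ irreflexive e.

Definition graph_connected (N : nat) (e : rel 'I_N) : Prop :=
  forall x y : 'I_N, connect e x y.

Definition deg (N : nat) (e : rel 'I_N) (i : 'I_N) : nat := #|[set j | e i j]|.

Definition nedges (N : nat) (e : rel 'I_N) : nat :=
  #|[set p : 'I_N * 'I_N | (p.1 < p.2)%N && e p.1 p.2]|.

Definition laplacian (R : pzRingType) (N : nat) (e : rel 'I_N) : 'M[R]_N :=
  \matrix_(i, j) (if i == j then (deg e i)%:R else if e i j then -1 else 0).

(* Effective resistance between i and j with unit resistors on edges:
   the potential difference w_i - w_j, where w is a potential with
   L w = e_i - e_j (unit current in at i, out at j).  Such a w is
   obtained (as a row vector, L being symmetric) by w := u *m pinvmx L,
   with u = e_i - e_j, and then w_i - w_j = w *m u^T. *)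
Definition eff_res (R : fieldType) (N : nat) (e : rel 'I_N) (i j : 'I_N) : R :=
  let u : 'rV[R]_N := delta_mx 0 i - delta_mx 0 j in
  (u *m pinvmx (laplacian R e) *m u^T) 0 0.

Definition add_deg_kirchhoff (R : fieldType) (N : nat) (e : rel 'I_N) : R :=
  \sum_(i < N) \sum_(j < N | (i < j)%N)
     ((deg e i + deg e j)%:R * eff_res R e i j).

From HB Require Import structures.
From mathcomp Require Import all_boot all_order all_algebra.
From mathcomp Require Import ring lra.
Import Order.TTheory GRing.Theory Num.Theory.
Local Open Scope ring_scope.

(* Thomson's principle in dual form gives [R_ij >= 2 (x_i - x_j) - x L x^T] for
   every potential [x]; at [x = e_i / d_i - e_j / d_j] this reads
   [R_ij >= 1/d_i + 1/d_j - 2 a_ij / (d_i d_j)].  Weighting by [d_i + d_j] and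
   summing over pairs gives [R^+(G) >= N (N - 4) + 2|E| sum_i 1/d_i]; the [M]
   leaves contribute [M] to the last sum, and Cauchy-Schwarz bounds the
   remaining [N - M] terms below by [(N - M)^2 / (2|E| - M)]. *)

Lemma sum_lt_pairs {R : comPzRingType} {N : nat} (g : 'I_N -> 'I_N -> R) :
  (forall i j, g i j = g j i) ->
  2 * \sum_(i < N) \sum_(j < N | (i < j)%N) g i j =
  \sum_i \sum_j g i j - \sum_i g i i.
Proof.
move=> g_sym.
have split_row i : \sum_j g i j =
    \sum_(j < N | (i < j)%N) g i j + g i i + \sum_(j < N | (j < i)%N) g i j.
  rewrite (bigID (fun j : 'I_N => (i < j)%N)) /= -addrA; congr (_ + _).
  rewrite (bigD1 i) ?ltnn //=; congr (_ + _); apply: eq_bigl => j.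
  by rewrite -leqNgt ltn_neqAle -val_eqE andbC.
have lower_upper : \sum_(i < N) \sum_(j < N | (j < i)%N) g i j =
    \sum_(i < N) \sum_(j < N | (i < j)%N) g i j.
  rewrite (exchange_big_dep predT) //=; apply: eq_bigr => i _.
  by apply: eq_bigr => j _; rewrite g_sym.
rewrite (eq_bigr _ (fun i _ => split_row i)) !big_split /= lower_upper; ring.
Qed.

Lemma sum_inv_ge (R : realFieldType) (I : finType) (A : {pred I}) (d : I -> R) :
  (forall i, i \in A -> 0 < d i) ->
  #|A|%:R ^+ 2 / \sum_(i in A) d i <= \sum_(i in A) (d i)^-1.
Proof.
move=> d_gt0; set K : R := #|A|%:R; set S := \sum_(i in A) d i.
have [S0|S_neq0] := eqVneq S 0.
  by rewrite S0 invr0 mulr0 sumr_ge0 // => i /d_gt0 /ltW; rewrite invr_ge0.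
(* pointwise [2 t - t^2 d <= 1/d], summed at the optimal [t = K / S] *)
have tangent i : i \in A -> 2 * (K / S) - (K / S) ^+ 2 * d i <= (d i)^-1.
  move=> Ai; have di_gt0 := d_gt0 i Ai.
  rewrite -subr_ge0 (_ : _ - _ = (1 - K / S * d i) ^+ 2 / d i).
    by rewrite divr_ge0 ?sqr_ge0 ?ltW.
  by field; rewrite gt_eqF.
suff -> : K ^+ 2 / S = \sum_(i in A) (2 * (K / S) - (K / S) ^+ 2 * d i).
  exact: ler_sum.
by rewrite sumrB sumr_const -mulr_sumr -/S -mulr_natr; field.
Qed.

Lemma bilin_deltaE {R : pzSemiRingType} {N : nat} (A : 'M[R]_N) (k l : 'I_N) :
  (delta_mx 0 k : 'rV_N) *m A *m (delta_mx 0 l : 'rV_N)^T = (A k l)%:M.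
Proof. by apply/matrixP => ? ?; rewrite !ord1 -rowE trmx_delta -colE !mxE. Qed.

Lemma bilin_delta_pairE {R : comPzRingType} {N : nat} (A : 'M[R]_N) (i j : 'I_N)
    (a b c d : R) :
  ((a *: delta_mx 0 i + b *: delta_mx 0 j : 'rV_N) *m A
     *m (c *: delta_mx 0 i + d *: delta_mx 0 j : 'rV_N)^T) 0 0 =
  a * c * A i i + a * d * A i j + b * c * A j i + b * d * A j j.
Proof.
rewrite linearD !linearZ /= !(mulmxDl, mulmxDr) -!scalemxAl -!scalemxAr.
by rewrite !bilin_deltaE !mxE /=; ring.
Qed.

Lemma bilinE {R : pzSemiRingType} {N : nat} (A : 'M[R]_N) (x y : 'rV[R]_N) :
  (x *m A *m y^T) 0 0 = \sum_a \sum_b x 0 a * A a b * y 0 b.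
Proof.
rewrite mxE exchange_big /=; apply: eq_bigr => b _.
by rewrite mxE mulr_suml; apply: eq_bigr => a _; rewrite mxE.
Qed.

Section Laplacian.
Context (R : comPzRingType) {N : nat} (e : rel 'I_N).
Hypotheses (e_sym : symmetric e) (e_irr : irreflexive e).

Lemma deg_sumr (a : 'I_N) : (deg e a)%:R = \sum_b (e a b)%:R :> R.
Proof.
rewrite /deg -sum1_card natr_sum big_mkcond /=; apply: eq_bigr => b _.
by rewrite inE; case: (e a b).
Qed.

Lemma laplacianE (a b : 'I_N) :
  laplacian R e a b = (a == b)%:R * (deg e a)%:R - (e a b)%:R.
Proof.
rewrite /laplacian mxE; have [->|_] := eqVneq a b; first by rewrite e_irr mul1r subr0.
by rewrite mul0r sub0r; case: (e a b); rewrite ?oppr0.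
Qed.

Lemma tr_laplacian : (laplacian R e)^T = laplacian R e.
Proof. by apply/matrixP => a b; rewrite !mxE eq_sym e_sym; case: eqP => // ->. Qed.

Lemma sum_deg : \sum_a (deg e a)%:R = 2 * (nedges e)%:R :> R.
Proof.
have -> : (nedges e)%:R = \sum_(a < N) \sum_(b < N | (a < b)%N) (e a b)%:R :> R.
  rewrite /nedges -sum1_card natr_sum big_mkcond /=.
  under [RHS]eq_bigr => a _ do rewrite big_mkcond.
  rewrite pair_bigA /=; apply: eq_bigr => p _; rewrite inE.
  by case: (p.1 < p.2)%N; case: (e p.1 p.2).
rewrite sum_lt_pairs => [|a b]; last by rewrite e_sym.
rewrite [X in _ - X]big1 ?subr0 => [|a _]; last by rewrite e_irr.
by apply: eq_bigr => a _; rewrite deg_sumr.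
Qed.

Lemma laplacian_form_edges (x : 'rV[R]_N) :
  2 * (x *m laplacian R e *m x^T) 0 0 =
  \sum_a \sum_b (e a b)%:R * (x 0 a - x 0 b) ^+ 2.
Proof.
have expand a b : (e a b)%:R * (x 0 a - x 0 b) ^+ 2 =
    (e a b)%:R * x 0 a ^+ 2 + (e a b)%:R * x 0 b ^+ 2 - 2 * (x 0 a * (e a b)%:R * x 0 b).
  by ring.
have diag a : \sum_b x 0 a * ((a == b)%:R * (deg e a)%:R) * x 0 b =
    (deg e a)%:R * x 0 a ^+ 2.
  rewrite (bigD1 a) //= eqxx /= big1 ?addr0 => [|b]; first by ring.
  by rewrite eq_sym => /negbTE ->; rewrite !(mul0r, mulr0).
have deg_left a : \sum_b (e a b)%:R * x 0 a ^+ 2 = (deg e a)%:R * x 0 a ^+ 2.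
  by rewrite deg_sumr mulr_suml.
have deg_right : \sum_a \sum_b (e a b)%:R * x 0 b ^+ 2 =
    \sum_(a < N) (deg e a)%:R * x 0 a ^+ 2.
  rewrite exchange_big; apply: eq_bigr => a _; rewrite deg_sumr mulr_suml.
  by apply: eq_bigr => b _; rewrite e_sym.
under [RHS]eq_bigr => a _ do
  rewrite (eq_bigr _ (fun b _ => expand a b)) sumrB big_split /=.
rewrite bilinE; under [in LHS]eq_bigr => a _ do
  under eq_bigr => b _ do rewrite laplacianE mulrBr mulrBl.
under [in LHS]eq_bigr => a _ do rewrite sumrB diag.
rewrite !sumrB big_split /= (eq_bigr _ (fun a _ => deg_left a)) deg_right.
under [X in _ = _ - X]eq_bigr => a _ do rewrite -mulr_sumr.
by rewrite -mulr_sumr; ring.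
Qed.

End Laplacian.

(* The value of [2 (x_i - x_j) - x L x^T] at [x = e_i / d_i - e_j / d_j]. *)
Definition deg_res_lb (R : fieldType) {N : nat} (e : rel 'I_N) (i j : 'I_N) : R :=
  (deg e i)%:R^-1 + (deg e j)%:R^-1 - 2 * (e i j)%:R / ((deg e i)%:R * (deg e j)%:R).

Section Connected.
Context (R : realFieldType) {N : nat} {e : rel 'I_N}.
Hypotheses (e_simple : simple_graph e) (e_conn : graph_connected e).

Let L := laplacian R e.

Lemma laplacian_form_ge0 (x : 'rV[R]_N) : 0 <= (x *m L *m x^T) 0 0.
Proof.
have [e_sym e_irr] := e_simple.
rewrite -(pmulr_rge0 _ (ltr0n R 2)) laplacian_form_edges //.
by do 2!apply: sumr_ge0 => ? _; rewrite mulr_ge0 ?sqr_ge0.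
Qed.

Lemma laplacian_form_eq0 (x : 'rV[R]_N) :
  (x *m L *m x^T) 0 0 = 0 -> forall a b, x 0 a = x 0 b.
Proof.
have [e_sym e_irr] := e_simple.
move=> /(congr1 (fun r => 2 * r)); rewrite laplacian_form_edges // mulr0.
have edge_ge0 a b : 0 <= (e a b)%:R * (x 0 a - x 0 b) ^+ 2 by rewrite mulr_ge0 ?sqr_ge0.
move=> /(psumr_eq0P (fun a _ => sumr_ge0 _ (fun b _ => edge_ge0 a b))) energy0.
have edge_eq a b : e a b -> x 0 a = x 0 b.
  move=> eab; have := psumr_eq0P (fun b _ => edge_ge0 a b) (energy0 a isT) (i := b) isT.
  by rewrite eab mul1r => /eqP; rewrite sqrf_eq0 subr_eq0 => /eqP.
move=> a b; have /connectP [p a_p ->] := e_conn a b.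
by elim: p a a_p => [|c p IHp] a //= /andP [/edge_eq -> /IHp].
Qed.

(* By connectivity the left kernel of [L] is the constants, and [e_i - e_j] is
   orthogonal to it. *)
Lemma delta_sub_laplacian (i j : 'I_N) :
  ((delta_mx 0 i : 'rV[R]_N) - delta_mx 0 j <= L)%MS.
Proof.
have [e_sym _] := e_simple.
rewrite submxE; apply/eqP/matrixP => r k; rewrite ord1 mulmxBl -!rowE !mxE.
set x := (col k (cokermx L))^T.
have xL0 : x *m L = 0.
  have LC : L *m col k (cokermx L) = 0 by rewrite colE mulmxA mulmx_coker mul0mx.
  by rewrite -[L in x *m L]tr_laplacian // -trmx_mul LC trmx0.
have := @laplacian_form_eq0 x; rewrite xL0 mul0mx mxE => /(_ erefl i j).
by rewrite !mxE => ->; rewrite subrr.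
Qed.

(* Dual Thomson principle: [R_ij] is the maximum over potentials [x] of
   [2 (x_i - x_j) - x L x^T], attained at the true potential [w]. *)
Lemma eff_res_ge (i j : 'I_N) (x : 'rV[R]_N) :
  2 * (((delta_mx 0 i : 'rV[R]_N) - delta_mx 0 j) *m x^T) 0 0
    - (x *m L *m x^T) 0 0 <= eff_res R e i j.
Proof.
have [e_sym _] := e_simple.
rewrite /eff_res -/L; set u : 'rV[R]_N := delta_mx 0 i - _.
set w := u *m pinvmx L.
have wL : w *m L = u by apply/mulmxKpV/delta_sub_laplacian.
clearbody u w.
have tr11 (C : 'M[R]_1) : C 0 0 = C^T 0 0 by rewrite mxE.
have sub11 (C D : 'M[R]_1) : (C - D) 0 0 = C 0 0 - D 0 0 by rewrite !mxE.
have xLw : (x *m L *m w^T) 0 0 = (u *m x^T) 0 0.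
  by rewrite [LHS]tr11 !trmx_mul trmxK tr_laplacian // mulmxA wL.
have := laplacian_form_ge0 (x - w).
rewrite linearB /= !(mulmxBl, mulmxBr) !sub11 wL xLw.
by rewrite [(u *m w^T) 0 0]tr11 trmx_mul trmxK; lra.
Qed.

Lemma eff_res_ge_deg_res_lb (i j : 'I_N) : i != j ->
  (0 < deg e i)%N -> (0 < deg e j)%N -> deg_res_lb R e i j <= eff_res R e i j.
Proof.
have [e_sym _] := e_simple.
move=> neq_ij di_gt0 dj_gt0; rewrite /deg_res_lb.
set di : R := (deg e i)%:R; set dj : R := (deg e j)%:R.
have dot := bilin_delta_pairE 1%:M i j 1 (-1) di^-1 (- dj^-1).
rewrite mulmx1 scale1r scaleN1r in dot.
have := eff_res_ge i j (di^-1 *: delta_mx 0 i + (- dj^-1) *: delta_mx 0 j).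
rewrite dot bilin_delta_pairE !mxE !eqxx [j == i]eq_sym (negbTE neq_ij) (e_sym j i) /=.
have di0 : di != 0 by rewrite pnatr_eq0 -lt0n.
have dj0 : dj != 0 by rewrite pnatr_eq0 -lt0n.
apply: le_trans; rewrite le_eqVlt; apply/orP; left; apply/eqP.
by case: (e i j); rewrite /= -/di -/dj; field; rewrite di0 dj0.
Qed.

Lemma connected_deg_gt0 (a : 'I_N) : (1 < N)%N -> (0 < deg e a)%N.
Proof.
move=> N_gt1; have /card_gt0P [b] : (0 < #|predC1 a|)%N.
  by rewrite cardC1 card_ord -subn1 subn_gt0.
rewrite inE => neq_ba; have /connectP [[|c p] /=] := e_conn a b.
  by move=> _ eq_ba; rewrite eq_ba eqxx in neq_ba.
by case/andP=> eac _ _; apply/card_gt0P; exists c; rewrite inE.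
Qed.

End Connected.

Section PairSum.
Context (R : numFieldType) {N : nat} (e : rel 'I_N).
Hypotheses (e_sym : symmetric e) (e_irr : irreflexive e).
Hypothesis deg_gt0 : forall a, (0 < deg e a)%N.

Let d a : R := (deg e a)%:R.

Lemma sum_pairs_deg_res_lb :
  \sum_(i < N) \sum_(j < N | (i < j)%N) (deg e i + deg e j)%:R * deg_res_lb R e i j =
  N%:R * (N%:R - 4) + 2 * (nedges e)%:R * \sum_a (d a)^-1.
Proof.
have d_neq0 a : d a != 0 by rewrite pnatr_eq0 -lt0n.
have sum1N : \sum_(i < N) (1 : R) = N%:R by rewrite sumr_const card_ord.
pose g i j := (deg e i + deg e j)%:R * deg_res_lb R e i j.
rewrite -/(\sum_(i < N) \sum_(j < N | (i < j)%N) g i j).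
have gE i j : g i j = 2 + d i / d j + d j / d i
    - 2 * ((e i j)%:R / d i) - 2 * ((e i j)%:R / d j).
  by rewrite /g /deg_res_lb natrD -!/(d _); field; rewrite !d_neq0.
have sum_adj_inv : \sum_i \sum_j (e i j)%:R / d i = N%:R.
  rewrite -sum1N; apply: eq_bigr => i _.
  by rewrite -mulr_suml -deg_sumr mulfV ?d_neq0.
have sum_adj_inv' : \sum_i \sum_j (e i j)%:R / d j = N%:R.
  rewrite exchange_big -sum_adj_inv; apply: eq_bigr => i _.
  by apply: eq_bigr => j _; rewrite e_sym.
have sum_ratio : \sum_i \sum_j d j / d i = (\sum_a d a) * \sum_a (d a)^-1.
  by rewrite exchange_big big_distrlr.
have pair_sum : \sum_i \sum_j g i j =
    2 * N%:R ^+ 2 + 2 * (\sum_a d a) * \sum_a (d a)^-1 - 4 * N%:R.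
  under eq_bigr => i _ do
    rewrite (eq_bigr _ (fun j _ => gE i j)) !sumrB !big_split -!mulr_sumr /=.
  rewrite !sumrB !big_split -!mulr_sumr -mulr_suml /= sum_adj_inv sum_adj_inv' sum_ratio.
  under eq_bigr => i _ do rewrite sum1N.
  by rewrite sumr_const card_ord -mulr_natr; ring.
have diag_sum : \sum_i g i i = 4 * N%:R.
  rewrite -sum1N mulr_sumr; apply: eq_bigr => i _.
  by rewrite gE e_irr mul0r mulfV ?d_neq0; ring.
have g_sym i j : g i j = g j i by rewrite !gE e_sym; ring.
have := sum_lt_pairs g g_sym; rewrite pair_sum diag_sum sum_deg // => two_sum.
have two_neq0 : (2 : R) != 0 by rewrite pnatr_eq0.
by apply: (mulfI two_neq0); rewrite two_sum; ring.
Qed.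
End PairSum.

Lemma sum_inv_deg_ge (R : realFieldType) {N M : nat} {e : rel 'I_N} :
  symmetric e -> irreflexive e -> (forall a, (0 < deg e a)%N) ->
  (forall j : 'I_N, (j < M)%N -> deg e j = 1%N) -> (M <= N)%N ->
  M%:R + (N%:R - M%:R) ^+ 2 / (2 * (nedges e)%:R - M%:R)
    <= \sum_a ((deg e a)%:R : R)^-1.
Proof.
move=> e_sym e_irr deg_gt0 leaf_deg leMN.
set A := [pred i : 'I_N | ~~ (i < M)%N].
have split_sum (F : 'I_N -> R) :
    \sum_i F i = \sum_(i < N | (i < M)%N) F i + \sum_(i in A) F i.
  exact: bigID.
have leaf_sum (F : 'I_N -> R) : (forall i : 'I_N, (i < M)%N -> F i = 1) ->
    \sum_(i < N | (i < M)%N) F i = M%:R.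
  move=> F1; rewrite (eq_bigr (fun=> 1)) => [|i /F1 //].
  by rewrite (big_ord_narrow leMN) sumr_const card_ord.
have leaf_deg1 (i : 'I_N) : (i < M)%N -> (deg e i)%:R = 1 :> R by move/leaf_deg ->.
have cardA : #|A|%:R = N%:R - M%:R :> R.
  have := split_sum (fun=> 1); rewrite sumr_const card_ord leaf_sum // sumr_const.
  by move=> ->; rewrite addrC addKr.
have degA : \sum_(i in A) (deg e i)%:R = 2 * (nedges e)%:R - M%:R :> R.
  by rewrite -sum_deg // split_sum leaf_sum // addrC addKr.
rewrite split_sum leaf_sum => [|i /leaf_deg1 ->]; last exact: invr1.
by rewrite lerD2l -cardA -degA sum_inv_ge // => i _; rewrite ltr0n.
Qed.

Theorem theorem2 (R : realFieldType) (N M : nat) (e : rel 'I_N) :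
  simple_graph e ->
  graph_connected e ->
  (forall i j : 'I_N, (i <= j)%N -> (deg e i <= deg e j)%N) ->
  (forall j : 'I_N, (j < M)%N -> deg e j = 1%N) ->
  (M < N)%N ->
  add_deg_kirchhoff R e >=
    (N%:R * (N%:R - 4)) +
    (2 * (nedges e)%:R) *
      (M%:R + (N%:R - M%:R) ^+ 2 / (2 * (nedges e)%:R - M%:R)).
Proof.
(* The ordering of the degrees only serves to name the leaves [0, ..., M-1]. *)
move=> e_simple e_conn _ leaf_deg ltMN; have [e_sym e_irr] := e_simple.
have [N_gt1|N_le1] := ltnP 1 N; last first.
  have N1 : N = 1%N by apply/eqP; rewrite eqn_leq N_le1 (leq_ltn_trans (leq0n M) ltMN).
  subst N; have -> : M = 0%N by case: M ltMN leaf_deg.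
  have -> : nedges e = 0%N.
    by apply/eqP; rewrite cards_eq0; apply/eqP/setP => -[a b]; rewrite !inE !ord1.
  rewrite /add_deg_kirchhoff big1 => [|i _]; last by rewrite big1 // => j; rewrite !ord1.
  by rewrite mulr0 mul0r addr0 mul1r subr_le0 ler1n.
have deg_gt0 a : (0 < deg e a)%N := connected_deg_gt0 e_conn a N_gt1.
have pairs_le : \sum_(i < N) \sum_(j < N | (i < j)%N)
    (deg e i + deg e j)%:R * deg_res_lb R e i j <= add_deg_kirchhoff R e.
  apply: ler_sum => i _; apply: ler_sum => j lt_ij.
  by rewrite ler_wpM2l // eff_res_ge_deg_res_lb // neq_ltn lt_ij.
rewrite sum_pairs_deg_res_lb // in pairs_le.
have := sum_inv_deg_ge R e_sym e_irr deg_gt0 leaf_deg (ltnW ltMN).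
move/(ler_wpM2l (mulr_ge0 (ler0n R 2) (ler0n R (nedges e)))); lra.
Qed.
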